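(* Let $(\hat A,\hat B)$ satisfy $\max\{\|\hat A-A_\star\|,\|\hat B-B_\star\|\}\le\varepsilon_\mathrm{m}$ and let $F\in\mathbb{S}^n_+$ satisfy $\|F-P_\star\|\le\varepsilon$. Assume $m\le n$, $R\succeq I$, $Q\succeq I$, $(A_\star,B_\star)$ stabilizable, $\|A_\star\|,\|B_\star\|,\|P_\star\|\le\Upsilon_\star$ with $\Upsilon_\star\ge\max\{1,\varepsilon_\mathrm{m}\}$, and $\Upsilon_\star\ge\varepsilon$. Then $K=\mathcal{K}_{\hat A,\hat B}(F)$ satisfies $$\|K-K_\star\|\le\frac{\Upsilon_\star^2(\sqrt{\|P_\star\|}+1)(3\varepsilon_\mathrm{m}+4\varepsilon)}{\underline{\sigma}(R)}.$$
   Context: $A_\star\in\mathbb{R}^{n\times n}$, $B_\star\in\mathbb{R}^{n\times m}$; weights $Q\in\mathbb{S}^n_+$, $R\in\mathbb{S}^m_{++}$; $\|\cdot\|$ spectral norm; $\underline{\sigma}$ smallest singular value. $S_B=BR^{-1}B^\top$; Riccati map $\mathcal{R}_{A,B}(P)=A^\top P(I+S_BP)^{-1}A+Q$. $\mathcal{K}_{A,B}(F)=(R+B^\top FB)^{-1}B^\top FA$. $P_\star$ is the unique positive definite solution of $P_\star=\mathcal{R}_{A_\star,B_\star}(P_\star)$, and $K_\star=\mathcal{K}_{A_\star,B_\star}(P_\star)$. *)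

From HB Require Import structures.
From mathcomp Require Import all_boot all_order all_algebra.
From mathcomp Require Import all_classical all_reals.
From mathcomp Require Import complex.
Set Implicit Arguments. Unset Strict Implicit. Unset Printing Implicit Defensive.
Import Order.TTheory GRing.Theory Num.Theory.
Local Open Scope ring_scope.
Local Open Scope classical_set_scope.

Section LQR.
Variable R : realType.

Definition vnorm (q : nat) (x : 'cV[R]_q) : R := Num.sqrt (\sum_i (x i 0) ^+ 2).

Definition usphere (q : nat) : set 'cV[R]_q := [set x | vnorm x = 1].

Definition spnorm (p q : nat) (A : 'M[R]_(p, q)) : R :=
  sup [set vnorm (A *m x) | x in @usphere q].

Definition sigma_min (q : nat) (A : 'M[R]_q) : R :=
  inf [set vnorm (A *m x) | x in @usphere q].

Definition symmetric (q : nat) (A : 'M[R]_q) : Prop := A^T = A.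

Definition psd (q : nat) (A : 'M[R]_q) : Prop :=
  symmetric A /\ forall x : 'cV[R]_q, 0 <= (x^T *m A *m x) 0 0.

Definition pd (q : nat) (A : 'M[R]_q) : Prop :=
  symmetric A /\ forall x : 'cV[R]_q, x != 0 -> 0 < (x^T *m A *m x) 0 0.

Definition loewner_ge (q : nat) (A B : 'M[R]_q) : Prop := psd (A - B).

Definition schur_stable (q : nat) (M : 'M[R]_q) : Prop :=
  forall z : R[i], root (map_poly (real_complex R) (char_poly M)) z -> `|z| < 1.

Definition stabilizable (n m : nat) (A : 'M[R]_n) (B : 'M[R]_(n, m)) : Prop :=
  exists K : 'M[R]_(m, n), schur_stable (A - B *m K).

Definition S_B (n m : nat) (B : 'M[R]_(n, m)) (Rw : 'M[R]_m) : 'M[R]_n :=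
  B *m invmx Rw *m B^T.

Definition riccati (n m : nat) (Q : 'M[R]_n) (Rw : 'M[R]_m)
    (A : 'M[R]_n) (B : 'M[R]_(n, m)) (P : 'M[R]_n) : 'M[R]_n :=
  A^T *m P *m invmx (1%:M + S_B B Rw *m P) *m A + Q.

Definition gainK (n m : nat) (Rw : 'M[R]_m)
    (A : 'M[R]_n) (B : 'M[R]_(n, m)) (F : 'M[R]_n) : 'M[R]_(m, n) :=
  invmx (Rw + B^T *m F *m B) *m B^T *m F *m A.

End LQR.

(* Write Ks = K(Ps) for the optimal gain, Ls = As - Bs Ks for the optimal closed loop and
   M = R + Bh^T F Bh.  Then
     M (K - Ks) = Bh^T F (Ah - As) - Bh^T F (Bh - Bs) Ks + (Bh - Bs)^T F Ls + Bs^T (F - Ps) Ls.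
   Since M >= R >= sigma(R) I, ||M^-1|| <= 1/sigma(R) and ||M^-1 Bh^T F|| <= sqrt(||F|| / sigma(R));
   the same bound at Ps gives ||Ks|| <= sqrt(||Ps|| / sigma(R)) ||As||.  The Riccati equation with
   Q >= I forces Ps >= I, and Ks minimises the closed-loop cost, so
   |Ls x|^2 <= x^T Ls^T Ps Ls x <= x^T As^T Ps As x, i.e. ||Ls|| <= sqrt ||Ps|| ||As||.  The rest is
   arithmetic, using sqrt(||Ps|| + eps) sqrt ||Ps|| <= ||Ps|| + eps/2. *)

From HB Require Import structures.
From mathcomp Require Import all_boot all_order all_algebra.
From mathcomp Require Import all_classical all_reals.
From mathcomp Require Import complex.
From mathcomp Require Import ring lra.
Set Implicit Arguments. Unset Strict Implicit. Unset Printing Implicit Defensive.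
Import Order.TTheory GRing.Theory Num.Theory.
Local Open Scope ring_scope.
Local Open Scope classical_set_scope.

Section EuclideanForms.
Variable R : realType.

Definition dot (k : nat) (u v : 'cV[R]_k) : R := (u^T *m v) 0 0.
Definition qform (k : nat) (P : 'M[R]_k) (u v : 'cV[R]_k) : R := (u^T *m P *m v) 0 0.

Lemma dotE k (u v : 'cV[R]_k) : dot u v = \sum_i u i 0 * v i 0.
Proof. by rewrite /dot mxE; apply: eq_bigr => i _; rewrite mxE. Qed.

Lemma dotC k (u v : 'cV[R]_k) : dot u v = dot v u.
Proof. by rewrite !dotE; apply: eq_bigr => i _; rewrite mulrC. Qed.

Lemma dotvv_ge0 k (u : 'cV[R]_k) : 0 <= dot u u.
Proof. by rewrite dotE; apply: sumr_ge0 => i _; rewrite -expr2 sqr_ge0. Qed.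

Lemma dot0r k (u : 'cV[R]_k) : dot 0 u = 0.
Proof. by rewrite /dot trmx0 mul0mx mxE. Qed.

Lemma dotDl k (u w v : 'cV[R]_k) : dot (u + w) v = dot u v + dot w v.
Proof. by rewrite /dot linearD mulmxDl mxE. Qed.

Lemma dotZl k a (u v : 'cV[R]_k) : dot (a *: u) v = a * dot u v.
Proof. by rewrite /dot linearZ -scalemxAl mxE. Qed.

Lemma dotNl k (u v : 'cV[R]_k) : dot (- u) v = - dot u v.
Proof. by rewrite -scaleN1r dotZl mulN1r. Qed.

Lemma dotBl k (u w v : 'cV[R]_k) : dot (u - w) v = dot u v - dot w v.
Proof. by rewrite dotDl dotNl. Qed.

Lemma dotDr k (u w v : 'cV[R]_k) : dot v (u + w) = dot v u + dot v w.
Proof. by rewrite dotC dotDl !(dotC v). Qed.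

Lemma dotZr k a (u v : 'cV[R]_k) : dot v (a *: u) = a * dot v u.
Proof. by rewrite dotC dotZl dotC. Qed.

Lemma dotBr k (u w v : 'cV[R]_k) : dot v (u - w) = dot v u - dot v w.
Proof. by rewrite !(dotC v) dotBl. Qed.

Lemma dot_mulmxr k l (A : 'M[R]_(k, l)) u v : dot u (A *m v) = dot (A^T *m u) v.
Proof. by rewrite /dot trmx_mul trmxK mulmxA. Qed.

Lemma qformE k (P : 'M[R]_k) u v : qform P u v = dot u (P *m v).
Proof. by rewrite /qform /dot mulmxA. Qed.

Lemma qform_sym k (P : 'M[R]_k) u v : P^T = P -> qform P u v = qform P v u.
Proof. by move=> sP; rewrite !qformE dot_mulmxr sP dotC. Qed.

Lemma qform0 k (P : 'M[R]_k) : qform P 0 0 = 0.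
Proof. by rewrite qformE dotC mulmx0 dot0r. Qed.

Lemma qformDm k (P P' : 'M[R]_k) x : qform (P + P') x x = qform P x x + qform P' x x.
Proof. by rewrite !qformE mulmxDl dotDr. Qed.

Lemma qformBm k (P P' : 'M[R]_k) x : qform (P - P') x x = qform P x x - qform P' x x.
Proof. by rewrite !qformE mulmxBl dotBr. Qed.

Lemma qform1 k (x : 'cV[R]_k) : qform 1%:M x x = dot x x.
Proof. by rewrite qformE mul1mx. Qed.

Lemma qform_congr k l (B : 'M[R]_(k, l)) (P : 'M[R]_k) x :
  qform (B^T *m P *m B) x x = qform P (B *m x) (B *m x).
Proof. by rewrite !qformE -!mulmxA dot_mulmxr trmxK. Qed.

Lemma qform_CS k (P : 'M[R]_k) u v : P^T = P -> (forall x, 0 <= qform P x x) ->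
  qform P u v ^+ 2 <= qform P u u * qform P v v.
Proof.
move=> sP P_ge0.
have expand a b : qform P (a *: u + b *: v) (a *: u + b *: v) =
    a ^+ 2 * qform P u u + 2 * a * b * qform P u v + b ^+ 2 * qform P v v.
  rewrite !qformE !mulmxDr !dotDl !dotDr -!scalemxAr !dotZl !dotZr.
  by rewrite -!qformE (qform_sym u v sP); ring.
set a := qform P u u; set b := qform P u v; set c := qform P v v.
have h1 := P_ge0 (c *: u + (- b) *: v); rewrite expand -/a -/b -/c in h1.
have h2 := P_ge0 (b *: u + (- a) *: v); rewrite expand -/a -/b -/c in h2.
have h3 := P_ge0 (1 *: u + (- b) *: v); rewrite expand -/a -/b -/c in h3.
have a_ge0 : 0 <= a by exact: P_ge0.
have c_ge0 : 0 <= c by exact: P_ge0.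
have [c0|c_neq0] := eqVneq c 0; last first.
  have c_gt0 : 0 < c by rewrite lt_def c_neq0 c_ge0.
  nra.
move: h2 h3; rewrite c0 mulr0; have [-> _|a_neq0 h2 _] := eqVneq a 0; first nra.
have a_gt0 : 0 < a by rewrite lt_def a_neq0 a_ge0.
nra.
Qed.

Lemma vnormE k (u : 'cV[R]_k) : vnorm u = Num.sqrt (dot u u).
Proof. by rewrite /vnorm dotE; congr Num.sqrt; apply: eq_bigr => i _; rewrite expr2. Qed.

Lemma vnorm_ge0 k (u : 'cV[R]_k) : 0 <= vnorm u.
Proof. exact: sqrtr_ge0. Qed.

Lemma vnorm_sq k (u : 'cV[R]_k) : vnorm u ^+ 2 = dot u u.
Proof. by rewrite vnormE sqr_sqrtr ?dotvv_ge0. Qed.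

Lemma vnorm0 k : vnorm (0 : 'cV[R]_k) = 0.
Proof. by rewrite vnormE dot0r sqrtr0. Qed.

Lemma vnorm_eq0 k (u : 'cV[R]_k) : (vnorm u == 0) = (u == 0).
Proof.
apply/idP/eqP => [|->]; last by rewrite vnorm0.
rewrite vnormE sqrtr_eq0 dotE => sum_le0.
have sqr_ge0' i : 0 <= u i 0 * u i 0 by rewrite -expr2 sqr_ge0.
have /psumr_eq0P ui0 : \sum_i u i 0 * u i 0 = 0.
  by apply/le_anti; rewrite sum_le0 sumr_ge0.
apply/matrixP => i j; rewrite (ord1 j) mxE.
by have /eqP := ui0 (fun i _ => sqr_ge0' i) i isT; rewrite mulf_eq0 orbb => /eqP.
Qed.

Lemma vnorm_gt0 k (u : 'cV[R]_k) : u != 0 -> 0 < vnorm u.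
Proof. by rewrite lt_def vnorm_ge0 vnorm_eq0 andbT. Qed.

Lemma vnormZ k a (u : 'cV[R]_k) : vnorm (a *: u) = `|a| * vnorm u.
Proof. by rewrite !vnormE dotZl dotZr mulrA -expr2 sqrtrM ?sqr_ge0 // sqrtr_sqr. Qed.

Lemma vnormN k (u : 'cV[R]_k) : vnorm (- u) = vnorm u.
Proof. by rewrite -scaleN1r vnormZ normrN1 mul1r. Qed.

Lemma dot_CS k (u v : 'cV[R]_k) : `|dot u v| <= vnorm u * vnorm v.
Proof.
have id_ge0 (x : 'cV[R]_k) : 0 <= qform 1%:M x x by rewrite qform1 dotvv_ge0.
have := qform_CS u v (trmx1 _ _) id_ge0; rewrite qformE mul1mx !qform1 => CS.
rewrite -ler_sqr ?nnegrE ?normr_ge0 ?mulr_ge0 ?vnorm_ge0 //.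
by rewrite real_normK ?num_real // exprMn !vnorm_sq.
Qed.

Lemma dot_le k (u v : 'cV[R]_k) : dot u v <= vnorm u * vnorm v.
Proof. exact: le_trans (ler_norm _) (dot_CS u v). Qed.

Lemma vnormD k (u v : 'cV[R]_k) : vnorm (u + v) <= vnorm u + vnorm v.
Proof.
rewrite -ler_sqr ?nnegrE ?addr_ge0 ?vnorm_ge0 //.
rewrite vnorm_sq dotDl !dotDr (dotC v u) sqrrD !vnorm_sq.
by have := dot_le u v; lra.
Qed.

End EuclideanForms.

Section OperatorNorms.
Variable R : realType.

Definition frobenius (k l : nat) (A : 'M[R]_(k, l)) : R :=
  Num.sqrt (\sum_i vnorm (row i A)^T ^+ 2).

Lemma vnorm_mulmx_le_frobenius k l (A : 'M[R]_(k, l)) x :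
  vnorm (A *m x) <= frobenius A * vnorm x.
Proof.
have rows_ge0 : 0 <= \sum_i vnorm (row i A)^T ^+ 2 by apply: sumr_ge0 => i _; exact: sqr_ge0.
rewrite -ler_sqr ?nnegrE ?mulr_ge0 ?vnorm_ge0 ?sqrtr_ge0 //.
rewrite exprMn /frobenius (sqr_sqrtr rows_ge0) mulr_suml vnorm_sq dotE; apply: ler_sum => i _.
have -> : (A *m x) i 0 = dot (row i A)^T x.
  by rewrite mxE dotE; apply: eq_bigr => j _; rewrite !mxE.
rewrite -expr2 -exprMn -real_normK ?num_real // ler_sqr ?nnegrE ?normr_ge0 //.
  exact: dot_CS.
by rewrite mulr_ge0 ?vnorm_ge0.
Qed.

Lemma spnorm_has_ub k l (A : 'M[R]_(k, l)) :
  has_ubound [set vnorm (A *m x) | x in @usphere R l].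
Proof.
exists (frobenius A) => _ [x x1 <-].
by have := vnorm_mulmx_le_frobenius A x; rewrite x1 mulr1.
Qed.

Lemma spnorm_ge0 k l (A : 'M[R]_(k, l)) : 0 <= spnorm A.
Proof.
rewrite /spnorm; set S := [set vnorm (A *m x) | x in @usphere R l].
have [/set0P [e Se]|/negPn/eqP ->] := boolP (S != set0); last by rewrite sup0.
apply: le_trans (ub_le_sup (spnorm_has_ub A) Se).
by case: Se => x _ <-; exact: vnorm_ge0.
Qed.

Lemma usphere_normalize k (x : 'cV[R]_k) : x != 0 -> usphere ((vnorm x)^-1 *: x).
Proof.
move=> x_neq0; have x_gt0 := vnorm_gt0 x_neq0.
by rewrite /usphere /= vnormZ ger0_norm ?invr_ge0 ?ltW // mulVf ?gt_eqF.
Qed.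

Lemma vnorm_mulmx_normalize k l (A : 'M[R]_(k, l)) x : x != 0 ->
  vnorm (A *m x) = vnorm (A *m ((vnorm x)^-1 *: x)) * vnorm x.
Proof.
move=> x_neq0; have x_gt0 := vnorm_gt0 x_neq0.
by rewrite -scalemxAr vnormZ ger0_norm ?invr_ge0 ?ltW // mulrAC mulVf ?gt_eqF ?mul1r.
Qed.

Lemma vnorm_mulmx_le k l (A : 'M[R]_(k, l)) x : vnorm (A *m x) <= spnorm A * vnorm x.
Proof.
have [->|x_neq0] := eqVneq x 0; first by rewrite mulmx0 !vnorm0 mulr0.
rewrite (vnorm_mulmx_normalize A x_neq0) ler_wpM2r ?vnorm_ge0 //.
by have := ub_le_sup (spnorm_has_ub A) (ex_intro2 _ _ _ (usphere_normalize x_neq0) erefl).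
Qed.

Lemma spnorm_le k l (A : 'M[R]_(k, l)) c : 0 <= c ->
  (forall x, vnorm (A *m x) <= c * vnorm x) -> spnorm A <= c.
Proof.
move=> c_ge0 Ax_le; rewrite /spnorm; set S := [set vnorm (A *m x) | x in @usphere R l].
have [/set0P S_neq0|/negPn/eqP ->] := boolP (S != set0); last by rewrite sup0.
by apply: ge_sup => // _ [x x1 <-]; have := Ax_le x; rewrite x1 mulr1.
Qed.

Lemma spnorm_rows0 l (A : 'M[R]_(0, l)) : spnorm A = 0.
Proof.
apply/le_anti; rewrite spnorm_ge0 andbT.
by apply: spnorm_le => // x; rewrite flatmx0 vnorm0 mul0r.
Qed.

Lemma spnorm_le_dot k l (A : 'M[R]_(k, l)) c : 0 <= c ->
  (forall y x, dot y (A *m x) <= c * vnorm y * vnorm x) -> spnorm A <= c.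
Proof.
move=> c_ge0 dot_le_c; apply: spnorm_le => // x.
have := dot_le_c (A *m x) x; rewrite -vnorm_sq.
have [->|Ax_neq0] := eqVneq (vnorm (A *m x)) 0; first by rewrite mulr_ge0 ?vnorm_ge0.
have Ax_gt0 : 0 < vnorm (A *m x) by rewrite lt_def Ax_neq0 vnorm_ge0.
by rewrite expr2 (mulrC c) -mulrA ler_pM2l.
Qed.

Lemma spnormM_le k l o (A : 'M[R]_(k, l)) (B : 'M[R]_(l, o)) :
  spnorm (A *m B) <= spnorm A * spnorm B.
Proof.
apply: spnorm_le => [|x]; first by rewrite mulr_ge0 ?spnorm_ge0.
rewrite -mulmxA; apply: le_trans (vnorm_mulmx_le _ _) _.
by rewrite -mulrA ler_wpM2l ?spnorm_ge0 ?vnorm_mulmx_le.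
Qed.

Lemma spnormM3_le k l o q (A : 'M[R]_(k, l)) (B : 'M[R]_(l, o)) (C : 'M[R]_(o, q)) a b c :
  spnorm A <= a -> spnorm B <= b -> spnorm C <= c -> spnorm (A *m B *m C) <= a * b * c.
Proof.
move=> Aa Bb Cc; apply: le_trans (spnormM_le _ _) _.
apply: ler_pM; rewrite ?spnorm_ge0 //; apply: le_trans (spnormM_le _ _) _.
by apply: ler_pM; rewrite ?spnorm_ge0.
Qed.

Lemma spnormD_le k l (A B : 'M[R]_(k, l)) : spnorm (A + B) <= spnorm A + spnorm B.
Proof.
apply: spnorm_le => [|x]; first by rewrite addr_ge0 ?spnorm_ge0.
rewrite mulmxDl mulrDl; apply: le_trans (vnormD _ _) _.
by rewrite lerD ?vnorm_mulmx_le.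
Qed.

Lemma spnormN k l (A : 'M[R]_(k, l)) : spnorm (- A) = spnorm A.
Proof.
have spnormN_le (B : 'M[R]_(k, l)) : spnorm (- B) <= spnorm B.
  by apply: spnorm_le => [|x]; rewrite ?spnorm_ge0 // mulNmx vnormN vnorm_mulmx_le.
apply/le_anti; rewrite spnormN_le /=.
by have := spnormN_le (- A); rewrite opprK.
Qed.

Lemma spnorm_tr_le k l (A : 'M[R]_(k, l)) : spnorm A^T <= spnorm A.
Proof.
apply: spnorm_le_dot => [|y x]; first exact: spnorm_ge0.
rewrite dot_mulmxr trmxK; apply: le_trans (dot_le _ _) _.
by rewrite ler_wpM2r ?vnorm_ge0 ?vnorm_mulmx_le.
Qed.

Lemma qform_le_spnorm k (P : 'M[R]_k) x : qform P x x <= spnorm P * vnorm x ^+ 2.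
Proof.
rewrite qformE dotC; apply: le_trans (dot_le _ _) _.
by rewrite expr2 mulrA ler_wpM2r ?vnorm_ge0 ?vnorm_mulmx_le.
Qed.

Lemma sigma_min_ge0 k (A : 'M[R]_k) : 0 <= sigma_min A.
Proof.
rewrite /sigma_min; set S := [set vnorm (A *m x) | x in @usphere R k].
have [/set0P S_neq0|/negPn/eqP ->] := boolP (S != set0); last by rewrite inf0.
by apply: lb_le_inf => // _ [x _ <-]; exact: vnorm_ge0.
Qed.

Lemma vnorm_mulmx_ge k (A : 'M[R]_k) z : sigma_min A * vnorm z <= vnorm (A *m z).
Proof.
have [->|z_neq0] := eqVneq z 0; first by rewrite mulmx0 !vnorm0 mulr0.
rewrite (vnorm_mulmx_normalize A z_neq0) ler_wpM2r ?vnorm_ge0 //.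
have S_lb : has_lbound [set vnorm (A *m x) | x in @usphere R k].
  by exists 0 => _ [x _ <-]; exact: vnorm_ge0.
by have := ge_inf S_lb (ex_intro2 _ _ _ (usphere_normalize z_neq0) erefl).
Qed.

(* The unit sphere of R^0 is empty, so this is inf set0. *)
Lemma sigma_min_dim0 (A : 'M[R]_0) : sigma_min A = 0.
Proof.
rewrite /sigma_min; suff -> : @usphere R 0 = set0 by rewrite image_set0 inf0.
by apply/seteqP; split => // x; rewrite /usphere /= flatmx0 vnorm0 => /esym/eqP; rewrite oner_eq0.
Qed.

Lemma sigma_min_ge1 k (Rw : 'M[R]_k) : (0 < k)%N -> loewner_ge Rw 1%:M -> 1 <= sigma_min Rw.
Proof.
move=> k_gt0 [_ Rw_ge1]; apply: lb_le_inf.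
  pose e : 'cV[R]_k := delta_mx (Ordinal k_gt0) 0.
  have e_neq0 : e != 0.
    by apply/eqP => /matrixP/(_ (Ordinal k_gt0) 0)/eqP; rewrite !mxE !eqxx oner_eq0.
  exists (vnorm (Rw *m ((vnorm e)^-1 *: e))), ((vnorm e)^-1 *: e) => //.
  exact: usphere_normalize.
move=> _ [z z1 <-].
have := Rw_ge1 z; rewrite -/(qform _ z z) qformBm qform1 subr_ge0 qformE => zz_le.
by have := le_trans zz_le (dot_le _ _); rewrite -vnorm_sq z1 expr1n mul1r.
Qed.

End OperatorNorms.

Section Definiteness.
Variable R : realType.

Lemma unitmx_of_ker k (M : 'M[R]_k) : (forall y : 'cV_k, M *m y = 0 -> y = 0) -> M \in unitmx.
Proof.
move=> ker0; rewrite -unitmx_tr unitmxE unitfE; apply/negP => /det0P [v v_neq0 vM0].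
have /ker0 vT0 : M *m v^T = 0 by rewrite -[M]trmxK -trmx_mul vM0 trmx0.
by move: v_neq0; rewrite -trmx_eq0 vT0 eqxx.
Qed.

Lemma pd_qform_ge0 k (P : 'M[R]_k) : pd P -> forall x, 0 <= qform P x x.
Proof.
move=> [_ P_gt0] x; have [->|x_neq0] := eqVneq x 0; first by rewrite qform0.
exact: ltW (P_gt0 x x_neq0).
Qed.

Lemma pd_psd k (P : 'M[R]_k) : pd P -> psd P.
Proof. by move=> P_pd; split; [exact: P_pd.1 | exact: pd_qform_ge0]. Qed.

Lemma pd_unitmx k (P : 'M[R]_k) : pd P -> P \in unitmx.
Proof.
move=> [_ P_gt0]; apply: unitmx_of_ker => y Py0; apply/eqP/negPn/negP => /P_gt0.
by rewrite -/(qform P y y) qformE Py0 dotC dot0r ltxx.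
Qed.

Lemma pd_qform_invmx_ge0 k (P : 'M[R]_k) : pd P -> forall z, 0 <= qform (invmx P) z z.
Proof.
move=> P_pd z; have P_unit := pd_unitmx P_pd.
have -> : z = P *m (invmx P *m z) by rewrite mulKVmx.
rewrite qformE mulKmx // dotC -qformE.
exact: pd_qform_ge0.
Qed.

(* Cauchy-Schwarz for the form of P at x and P^-1 x, and sigma_min P * |P^-1 x| <= |x|. *)
Lemma pd_qform_ge_sigma_min k (P : 'M[R]_k) x : pd P -> sigma_min P * dot x x <= qform P x x.
Proof.
move=> P_pd; have P_ge0 := pd_qform_ge0 P_pd; have P_unit := pd_unitmx P_pd.
have [->|x_neq0] := eqVneq x 0; first by rewrite qform0 dot0r mulr0.
set s := sigma_min P; set w := invmx P *m x.
have sw_le : s * vnorm w <= vnorm x by have := vnorm_mulmx_ge P w; rewrite mulKVmx.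
have CS : dot x x ^+ 2 <= qform P x x * dot w x.
  by have := qform_CS x w P_pd.1 P_ge0; rewrite !qformE mulKVmx.
have wx_le := dot_le w x; have x_gt0 := vnorm_gt0 x_neq0.
have s_ge0 : 0 <= s := sigma_min_ge0 P; have q_ge0 := P_ge0 x.
rewrite -vnorm_sq in CS *.
have : s * (vnorm x ^+ 2) ^+ 2 <= qform P x x * (vnorm x ^+ 2).
  apply: le_trans (ler_wpM2l s_ge0 CS) _; rewrite mulrCA ler_wpM2l //.
  apply: le_trans (ler_wpM2l s_ge0 wx_le) _.
  by rewrite mulrA expr2 ler_wpM2r ?vnorm_ge0.
by rewrite expr2 mulrA ler_pM2r ?exprn_gt0.
Qed.

End Definiteness.

Section Coercive.
Variables (R : realType) (k : nat) (M : 'M[R]_k) (s : R).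
Hypothesis s_gt0 : 0 < s.
Hypothesis M_coercive : forall x, s * dot x x <= qform M x x.

Lemma coercive_unitmx : M \in unitmx.
Proof.
apply: unitmx_of_ker => y My0; apply/eqP; rewrite -vnorm_eq0 -sqrf_eq0 vnorm_sq.
have := M_coercive y; rewrite qformE My0 dotC dot0r pmulr_rle0 // => yy_le0.
by rewrite eq_le yy_le0 dotvv_ge0.
Qed.

Lemma coercive_vnorm_invmx_le y : s * vnorm (invmx M *m y) <= vnorm y.
Proof.
set w := invmx M *m y.
have [->|w_neq0] := eqVneq (vnorm w) 0; first by rewrite mulr0 vnorm_ge0.
have w_gt0 : 0 < vnorm w by rewrite lt_def w_neq0 vnorm_ge0.
have : s * vnorm w ^+ 2 <= vnorm w * vnorm y.
  have := M_coercive w; rewrite qformE mulKVmx ?coercive_unitmx // -vnorm_sq.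
  by move/le_trans; apply; apply: dot_le.
by move=> sw2_le; rewrite -(ler_pM2l w_gt0) mulrCA -expr2.
Qed.

Lemma coercive_spnorm_invmx_le : spnorm (invmx M) <= s^-1.
Proof.
apply: spnorm_le => [|y]; first by rewrite invr_ge0 ltW.
by rewrite mulrC ler_pdivlMr // mulrC coercive_vnorm_invmx_le.
Qed.

Lemma coercive_qform_invmx_le y :
  qform M (invmx M *m y) (invmx M *m y) <= dot y y / s.
Proof.
rewrite qformE mulKVmx ?coercive_unitmx //; apply: le_trans (dot_le _ _) _.
rewrite -vnorm_sq ler_pdivlMr // mulrAC mulrC expr2 ler_wpM2l ?vnorm_ge0 //.
by rewrite mulrC coercive_vnorm_invmx_le.
Qed.

End Coercive.

Section Gain.
Variables (R : realType) (k l : nat) (Rw : 'M[R]_l) (B : 'M[R]_(k, l)) (F : 'M[R]_k).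
Hypotheses (Rw_pd : pd Rw) (F_psd : psd F) (s_gt0 : 0 < sigma_min Rw).
Let s := sigma_min Rw.
Let M := Rw + B^T *m F *m B.

Lemma gain_mx_sym : M^T = M.
Proof. by rewrite /M linearD /= !trmx_mul trmxK Rw_pd.1 F_psd.1 mulmxA. Qed.

Lemma gain_mx_coercive x : s * dot x x <= qform M x x.
Proof.
rewrite /M qformDm qform_congr; apply: le_trans (pd_qform_ge_sigma_min x Rw_pd) _.
by rewrite lerDl F_psd.2.
Qed.

Lemma gain_mx_unitmx : M \in unitmx.
Proof. exact: coercive_unitmx s_gt0 gain_mx_coercive. Qed.

Lemma spnorm_inv_gain_mx_le : spnorm (invmx M) <= s^-1.
Proof. exact: coercive_spnorm_invmx_le s_gt0 gain_mx_coercive. Qed.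

Lemma spnorm_gain_factor_le : spnorm (invmx M *m B^T *m F) <= Num.sqrt (spnorm F / s).
Proof.
have Fs_ge0 : 0 <= spnorm F / s by rewrite divr_ge0 ?spnorm_ge0 ?ltW.
apply: spnorm_le_dot => [|y z]; first exact: sqrtr_ge0.
set w := invmx M *m y.
have -> : dot y (invmx M *m B^T *m F *m z) = qform F (B *m w) z.
  by rewrite -!mulmxA !dot_mulmxr trmxK qformE trmx_inv gain_mx_sym dot_mulmxr F_psd.1.
have Bw_le : qform F (B *m w) (B *m w) <= dot y y / s.
  apply: le_trans _ (coercive_qform_invmx_le s_gt0 gain_mx_coercive y).
  by rewrite /M qformDm qform_congr lerDr pd_qform_ge0.
apply: le_trans (ler_norm _) _.
rewrite -ler_sqr ?nnegrE ?normr_ge0 ?mulr_ge0 ?sqrtr_ge0 ?vnorm_ge0 //.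
rewrite real_normK ?num_real //; apply: le_trans (qform_CS _ _ F_psd.1 F_psd.2) _.
rewrite !exprMn (sqr_sqrtr Fs_ge0).
have -> : spnorm F / s * vnorm y ^+ 2 * vnorm z ^+ 2 =
    (dot y y / s) * (spnorm F * vnorm z ^+ 2) by rewrite !vnorm_sq; ring.
by apply: ler_pM; rewrite ?F_psd.2 ?qform_le_spnorm.
Qed.

Lemma spnorm_gainK_le (A : 'M[R]_k) :
  spnorm (gainK Rw A B F) <= Num.sqrt (spnorm F / s) * spnorm A.
Proof.
apply: le_trans (spnormM_le _ _) _.
by rewrite ler_wpM2r ?spnorm_ge0 ?spnorm_gain_factor_le.
Qed.

Lemma qform_closed_loop_le (A : 'M[R]_k) x :
  qform F ((A - B *m gainK Rw A B F) *m x) ((A - B *m gainK Rw A B F) *m x)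
    <= qform F (A *m x) (A *m x).
Proof.
set kx := gainK Rw A B F *m x; set a := A *m x.
have Mkx : M *m kx = B^T *m (F *m a).
  by rewrite /kx /gainK !mulmxA mulmxV ?gain_mx_unitmx // mul1mx -!mulmxA.
have cross : dot (B *m kx) (F *m a) = qform M kx kx.
  by rewrite qformE Mkx (dot_mulmxr B^T) trmxK.
have cross' : dot a (F *m (B *m kx)) = qform M kx kx.
  by rewrite -qformE qform_sym ?F_psd.1 // qformE cross.
have quad : dot (B *m kx) (F *m (B *m kx)) = qform M kx kx - qform Rw kx kx.
  by rewrite -qformE /M qformDm qform_congr addrAC subrr add0r.
rewrite mulmxBl -mulmxA -/kx -/a qformE mulmxBr !dotBl !dotBr cross cross' quad -qformE.
have := pd_qform_ge0 Rw_pd kx; have := gain_mx_coercive kx.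
have := dotvv_ge0 kx; have := ltW s_gt0; nra.
Qed.

End Gain.

Section Riccati.
Variables (R : realType) (n m : nat) (Rw : 'M[R]_m) (B : 'M[R]_(n, m)) (P : 'M[R]_n).
Hypotheses (Rw_pd : pd Rw) (P_pd : pd P).

Lemma qform_S_B_ge0 y : 0 <= qform (S_B B Rw) y y.
Proof. by rewrite /S_B -{1}(trmxK B) qform_congr pd_qform_invmx_ge0. Qed.

Lemma riccati_shift_unitmx : 1%:M + S_B B Rw *m P \in unitmx.
Proof.
apply: unitmx_of_ker => y; rewrite mulmxDl mul1mx -mulmxA => /eqP; rewrite addr_eq0.
move=> /eqP y_eq; apply/eqP/negPn/negP => /(P_pd.2 y); rewrite -/(qform P y y).
have : qform P y y = - qform (S_B B Rw) (P *m y) (P *m y).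
  by rewrite qformE {1}y_eq dotNl dotC -qformE.
by move=> ->; rewrite oppr_gt0 ltNge qform_S_B_ge0.
Qed.

Lemma riccati_kernel_ge0 v : 0 <= qform (P *m invmx (1%:M + S_B B Rw *m P)) v v.
Proof.
set G := 1%:M + S_B B Rw *m P; set y := invmx G *m v.
have v_eq : v = y + S_B B Rw *m (P *m y).
  by rewrite mulmxA -[y in y + _]mul1mx -mulmxDl mulKVmx ?riccati_shift_unitmx.
rewrite qformE -mulmxA -/y {1}v_eq dotDl -qformE dotC -qformE.
by rewrite addr_ge0 ?qform_S_B_ge0 ?pd_qform_ge0.
Qed.

Lemma riccati_ge1 (Q A : 'M[R]_n) : P = riccati Q Rw A B P -> loewner_ge Q 1%:M ->
  forall x, dot x x <= qform P x x.
Proof.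
move=> P_fix [_ Q_ge1] x; have := Q_ge1 x.
rewrite -/(qform _ x x) qformBm qform1 subr_ge0 => /le_trans; apply.
rewrite {1}P_fix /riccati qformDm -(mulmxA A^T P) qform_congr lerDr.
exact: riccati_kernel_ge0.
Qed.

Lemma spnorm_closed_loop_le (Q A : 'M[R]_n) :
  P = riccati Q Rw A B P -> loewner_ge Q 1%:M -> 0 < sigma_min Rw ->
  spnorm (A - B *m gainK Rw A B P) <= Num.sqrt (spnorm P) * spnorm A.
Proof.
move=> P_fix Q_ge1 s_gt0.
apply: spnorm_le => [|x]; first by rewrite mulr_ge0 ?sqrtr_ge0 ?spnorm_ge0.
rewrite -ler_sqr ?nnegrE ?mulr_ge0 ?sqrtr_ge0 ?spnorm_ge0 ?vnorm_ge0 //.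
rewrite vnorm_sq; apply: le_trans (riccati_ge1 P_fix Q_ge1 _) _.
apply: le_trans (qform_closed_loop_le B Rw_pd (pd_psd P_pd) s_gt0 A x) _.
apply: le_trans (qform_le_spnorm _ _) _.
rewrite -mulrA [X in _ <= X]exprMn (sqr_sqrtr (spnorm_ge0 P)) ler_wpM2l ?spnorm_ge0 //.
rewrite ler_sqr ?nnegrE ?mulr_ge0 ?spnorm_ge0 ?vnorm_ge0 //.
exact: vnorm_mulmx_le.
Qed.

End Riccati.

Section GainPerturbation.
Variables (R : realType) (n m : nat) (Rw : 'M[R]_m).

Lemma spnorm_le_perturb k l (A A' : 'M[R]_(k, l)) : spnorm A' <= spnorm A + spnorm (A' - A).
Proof. by have := spnormD_le A (A' - A); rewrite addrC subrK. Qed.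

Lemma gainK_sub_decomp (Ah As : 'M[R]_n) (Bh Bs : 'M[R]_(n, m)) (F P : 'M[R]_n) :
  Rw + Bh^T *m F *m Bh \in unitmx -> Rw + Bs^T *m P *m Bs \in unitmx ->
  gainK Rw Ah Bh F - gainK Rw As Bs P =
  invmx (Rw + Bh^T *m F *m Bh) *m
   (Bh^T *m F *m (Ah - As) - Bh^T *m F *m (Bh - Bs) *m gainK Rw As Bs P
    + (Bh - Bs)^T *m F *m (As - Bs *m gainK Rw As Bs P)
    + Bs^T *m (F - P) *m (As - Bs *m gainK Rw As Bs P)).
Proof.
move=> Mh_unit Ms_unit; set Mh := Rw + _; set Ks := gainK Rw As Bs P.
have MhKh : Mh *m gainK Rw Ah Bh F = Bh^T *m F *m Ah.
  by rewrite /gainK !mulmxA mulmxV // mul1mx.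
have MsKs : (Rw + Bs^T *m P *m Bs) *m Ks = Bs^T *m P *m As.
  by rewrite /Ks /gainK !mulmxA mulmxV // mul1mx.
have RwKs : Rw *m Ks = Bs^T *m P *m As - Bs^T *m P *m Bs *m Ks.
  by rewrite -MsKs mulmxDl addrK.
rewrite -[LHS](mulKmx Mh_unit); congr (_ *m _).
rewrite mulmxBr MhKh /Mh mulmxDl RwKs; clearbody Ks.
rewrite [(Bh - Bs)^T]linearB /= !mulmxBr !mulmxBl !mulmxA.
by apply/matrixP => i j; rewrite !mxE; ring.
Qed.

Lemma spnorm_gainK_sub_le (Ah As : 'M[R]_n) (Bh Bs : 'M[R]_(n, m)) (F P : 'M[R]_n) :
  pd Rw -> psd F -> psd P -> 0 < sigma_min Rw ->
  spnorm (gainK Rw Ah Bh F - gainK Rw As Bs P) <=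
    (sigma_min Rw)^-1 * (spnorm Bh * spnorm F * spnorm (Ah - As))
  + Num.sqrt (spnorm F / sigma_min Rw) * spnorm (Bh - Bs) * spnorm (gainK Rw As Bs P)
  + (sigma_min Rw)^-1 * (spnorm (Bh - Bs) * spnorm F * spnorm (As - Bs *m gainK Rw As Bs P))
  + (sigma_min Rw)^-1 * (spnorm Bs * spnorm (F - P) * spnorm (As - Bs *m gainK Rw As Bs P)).
Proof.
move=> Rw_pd F_psd P_psd s_gt0.
rewrite gainK_sub_decomp ?gain_mx_unitmx //; set Mi := invmx _.
rewrite 2![Mi *m (_ + _)]mulmxDr [Mi *m (_ - _)]mulmxBr.
have Mi_mul_le k (T : 'M[R]_(m, k)) c :
    spnorm T <= c -> spnorm (Mi *m T) <= (sigma_min Rw)^-1 * c.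
  move=> T_le; apply: le_trans (spnormM_le _ _) _.
  by apply: ler_pM; rewrite ?spnorm_ge0 ?spnorm_inv_gain_mx_le.
have term_le k o (X : 'M[R]_(n, m)) (Y : 'M[R]_(n, k)) (Z : 'M[R]_(k, o)) :
    spnorm (Mi *m (X^T *m Y *m Z)) <= (sigma_min Rw)^-1 * (spnorm X * spnorm Y * spnorm Z).
  by apply: Mi_mul_le; apply: spnormM3_le; rewrite ?spnorm_tr_le.
apply: le_trans (spnormD_le _ _) _; apply: lerD _ (term_le _ _ _ _ _).
apply: le_trans (spnormD_le _ _) _; apply: lerD _ (term_le _ _ _ _ _).
apply: le_trans (spnormD_le _ _) _; rewrite spnormN; apply: lerD (term_le _ _ _ _ _) _.
set Ks := gainK _ _ _ _.
have -> : Mi *m (Bh^T *m F *m (Bh - Bs) *m Ks) = Mi *m Bh^T *m F *m (Bh - Bs) *m Ks.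
  by rewrite !mulmxA.
exact: spnormM3_le (spnorm_gain_factor_le _ _ _ _) (lexx _) (lexx _).
Qed.

End GainPerturbation.

Section GainArithmetic.
Variable R : realType.

Lemma ler_pM3 (a b c a' b' c' : R) : 0 <= a -> 0 <= b -> 0 <= c ->
  a <= a' -> b <= b' -> c <= c' -> a * b * c <= a' * b' * c'.
Proof. by move=> a0 b0 c0 aa bb cc; rewrite ler_pM ?mulr_ge0 ?ler_pM. Qed.

Lemma gain_bound_poly (u em e p r t : R) : 1 <= u -> 0 <= em <= u -> 0 <= e <= u ->
  0 <= p <= u -> 0 <= r -> 0 <= t -> r ^+ 2 = p + e -> t ^+ 2 = p ->
  (u + em) * (p + e) * em + r * t * u * em + em * (p + e) * (t * u) + u * e * (t * u)
    <= u ^+ 2 * (t + 1) * (3 * em + 4 * e).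
Proof.
move=> u_ge1 /andP[em0 emu] /andP[e0 eu] /andP[p0 pu] r0 t0 r2 t2.
have u0 : 0 <= u by lra.
have rt_le : r * t <= p + e / 2.
  by have := sqr_ge0 (r - t); rewrite sqrrB r2 t2; lra.
have a1 : u * p * em <= u * u * em by apply: ler_pM3.
have a2 : u * e * em <= u * e * u by apply: ler_pM3.
have a3 : em * em * p <= em * u * u by apply: ler_pM3.
have a4 : em * em * e <= u * u * e by apply: ler_pM3.
have a5 : r * t * (u * em) <= (p + e / 2) * (u * em) by rewrite ler_wpM2r ?mulr_ge0.
have a6 : u * e * em <= u * u * e by rewrite -mulrA (mulrC e) mulrA; apply: ler_pM3.
have a7 : em * p * (t * u) <= u * u * (t * u) by apply: ler_pM3; rewrite ?mulr_ge0.
have a8 : em * e * (t * u) <= u * e * (t * u) by apply: ler_pM3; rewrite ?mulr_ge0.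
have a9 : em * p * (t * u) <= em * u * (t * u) by apply: ler_pM3; rewrite ?mulr_ge0.
have b1 : 0 <= u * u * t * em by rewrite !mulr_ge0.
have b2 : 0 <= u * u * t * e by rewrite !mulr_ge0.
have b3 : 0 <= u * u * e by rewrite !mulr_ge0.
have b4 : 0 <= u * u * em by rewrite !mulr_ge0.
rewrite !expr2; lra.
Qed.

Lemma gain_bound_arith (s u em e p : R) : 0 < s -> 1 <= u -> 0 <= em <= u -> 0 <= e <= u ->
  0 <= p <= u ->
  s^-1 * ((u + em) * (p + e) * em) + Num.sqrt ((p + e) / s) * em * (Num.sqrt (p / s) * u)
  + s^-1 * (em * (p + e) * (Num.sqrt p * u)) + s^-1 * (u * e * (Num.sqrt p * u))
    <= u ^+ 2 * (Num.sqrt p + 1) * (3 * em + 4 * e) / s.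
Proof.
move=> s_gt0 u_ge1 em_le e_le /andP[p0 pu].
have pe0 : 0 <= p + e by move: e_le => /andP[e0 _]; rewrite addr_ge0.
have si0 : 0 <= s^-1 by rewrite invr_ge0 ltW.
have := gain_bound_poly u_ge1 em_le e_le (introT andP (conj p0 pu)) (sqrtr_ge0 (p + e))
  (sqrtr_ge0 p) (sqr_sqrtr pe0) (sqr_sqrtr p0) => /(ler_wpM2l si0).
have w2 : Num.sqrt s^-1 ^+ 2 = s^-1 := sqr_sqrtr si0.
rewrite (sqrtrM _ pe0) (sqrtrM _ p0); set w := Num.sqrt s^-1 in w2 *; rewrite -w2.
lra.
Qed.

End GainArithmetic.

Unset Implicit Arguments.
Local Close Scope classical_set_scope.

Theorem lemma6 (R : realType) (n m : nat)
    (Q : 'M[R]_n) (Rw : 'M[R]_m)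
    (Astar : 'M[R]_n) (Bstar : 'M[R]_(n, m)) (Pstar : 'M[R]_n)
    (Ahat : 'M[R]_n) (Bhat : 'M[R]_(n, m)) (F : 'M[R]_n)
    (eps_m eps Ups : R) :
  psd Q -> pd Rw ->
  pd Pstar -> Pstar = riccati Q Rw Astar Bstar Pstar ->
  (forall P : 'M[R]_n, pd P -> P = riccati Q Rw Astar Bstar P -> P = Pstar) ->
  Num.max (spnorm (Ahat - Astar)) (spnorm (Bhat - Bstar)) <= eps_m ->
  psd F -> spnorm (F - Pstar) <= eps ->
  (m <= n)%N ->
  loewner_ge Rw 1%:M -> loewner_ge Q 1%:M ->
  stabilizable Astar Bstar ->
  spnorm Astar <= Ups -> spnorm Bstar <= Ups -> spnorm Pstar <= Ups ->
  Num.max 1 eps_m <= Ups -> eps <= Ups ->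
  spnorm (gainK Rw Ahat Bhat F - gainK Rw Astar Bstar Pstar)
    <= Ups ^+ 2 * (Num.sqrt (spnorm Pstar) + 1) * (3 * eps_m + 4 * eps)
       / sigma_min Rw.
Proof.
move=> _ Rw_pd P_pd P_fix _ err_AB F_psd err_F _ Rw_ge1 Q_ge1 _ A_le B_le P_le Ups_ge eps_le.
move: err_AB Ups_ge; rewrite !ge_max => /andP[err_A err_B] /andP[Ups_ge1 eps_m_le].
have eps_m_ge0 : 0 <= eps_m := le_trans (spnorm_ge0 _) err_A.
have eps_ge0 : 0 <= eps := le_trans (spnorm_ge0 _) err_F.
have [m0|m_gt0] := posnP m.
  by subst m; rewrite spnorm_rows0 sigma_min_dim0 invr0 mulr0.
have s_gt0 : 0 < sigma_min Rw := lt_le_trans ltr01 (sigma_min_ge1 m_gt0 Rw_ge1).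
have P_psd := pd_psd P_pd.
have F_le : spnorm F <= spnorm Pstar + eps.
  by apply: le_trans (spnorm_le_perturb Pstar F) _; rewrite lerD2l.
have Bh_le : spnorm Bhat <= Ups + eps_m :=
  le_trans (spnorm_le_perturb Bstar Bhat) (lerD B_le err_B).
have si_ge0 : 0 <= (sigma_min Rw)^-1 by rewrite invr_ge0 ltW.
have Fs_le : Num.sqrt (spnorm F / sigma_min Rw) <= Num.sqrt ((spnorm Pstar + eps) / sigma_min Rw).
  by rewrite ler_wsqrtr // ler_wpM2r.
have Ks_le := le_trans (spnorm_gainK_le Bstar Rw_pd P_psd s_gt0 Astar)
  (ler_wpM2l (sqrtr_ge0 _) A_le).
have Ls_le := le_trans (spnorm_closed_loop_le Rw_pd P_pd P_fix Q_ge1 s_gt0)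
  (ler_wpM2l (sqrtr_ge0 _) A_le).
apply: le_trans (spnorm_gainK_sub_le Ahat Astar Bhat Bstar Rw_pd F_psd P_psd s_gt0) _.
apply: le_trans (gain_bound_arith s_gt0 Ups_ge1 _ _ _); rewrite ?eps_m_ge0 ?eps_ge0 ?spnorm_ge0 //.
by (do 3 try apply: lerD); rewrite ?ler_wpM2l //; apply: ler_pM3; rewrite ?spnorm_ge0 ?sqrtr_ge0.
Qed.
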